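(* Let $X\subseteq\mathbb{C}^n$ be a complex analytic set, $x\in X$, $\mathcal M\subseteq\mathcal O_{X,x}^p$ a submodule with matrix of generators $[\mathcal M]$, and $k\in\mathbb N$. Then for all $t_1,\dots,t_k\in\{1,\dots,n\}$ and all $k$-indexes $I,J,K,L$, $$(z_{t_1}-z'_{t_1})\cdots(z_{t_k}-z'_{t_k})\,\det(\mathcal M_{IJ})\,\det(\mathcal M'_{KL})\in J_{2k}(\mathcal M_D)\quad\text{at }(x,x).$$
   Context: $z_1,\dots,z_n$ are coordinates on $\mathbb C^n$. $\pi_1,\pi_2:X\times X\to X$ are the projections; for an object $A$ on $X$ we write $A$ for $A\circ\pi_1$ and $A'$ for $A\circ\pi_2$ (so $z_i'=z_i\circ\pi_2$). $\mathcal M_{IJ}$ is the $k\times k$ submatrix of $[\mathcal M]$ with rows $I$ and columns $J$ ($k$-indexes are strictly increasing tuples). For $h\in\mathcal O_X^p$, $h_D=(h\circ\pi_1,h\circ\pi_2)$; $\mathcal M_D$ is the submodule of $\mathcal O^{2p}_{X\times X}$ generated by $\{h_D:h\in\mathcal M\}$; if $\mathcal M$ is generated by $g_1,\dots,g_r$, $\mathcal M_D$ is generated by the $(g_j)_D$ together with $(0,(z_i-z_i')g_j')$, $i=1..n$, $j=1..r$. $J_{m}(N)$ is the ideal generated by the $m\times m$ minors of a matrix of generators of $N$. *)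

From HB Require Import structures.
From mathcomp Require Import all_boot all_order all_algebra.
Set Implicit Arguments. Unset Strict Implicit. Unset Printing Implicit Defensive.
Import Order.TTheory GRing.Theory Num.Theory.
Local Open Scope ring_scope.

Definition kindex (k m : nat) (f : {ffun 'I_k -> 'I_m}) : bool :=
  [forall i : 'I_k, forall j : 'I_k, (i < j)%N ==> (f i < f j)%N].

Definition minor_ideal (S : comNzRingType) (P Q m : nat) (A : 'M[S]_(P, Q)) (a : S) : Prop :=
  exists c : {ffun ({ffun 'I_m -> 'I_P} * {ffun 'I_m -> 'I_Q}) -> S},
    a = \sum_(fg | kindex fg.1 && kindex fg.2)
          c fg * \det (mxsub fg.1 fg.2 A).

(* Matrix of generators of M_D, for M with generator matrix G (columns g_1..g_r):
   columns (g_j o pi1, g_j o pi2), j < r, followed by the columns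
   (0, (z_t - z_t') (g_j o pi2)), (t, j) in 'I_n x 'I_r. *)
Definition MD_mx (R S : comNzRingType) (phi1 phi2 : {rmorphism R -> S})
  (n p r : nat) (z : 'I_n -> R) (G : 'M[R]_(p, r)) : 'M[S]_(p + p, r + n * r) :=
  row_mx (col_mx (map_mx phi1 G) (map_mx phi2 G))
         (col_mx 0 (\matrix_(a < p)
              mxvec (\matrix_(t < n, j < r) ((phi1 (z t) - phi2 (z t)) * phi2 (G a j))))).

From HB Require Import structures.
From mathcomp Require Import all_boot all_order all_algebra all_fingroup.
Import Order.TTheory GRing.Theory Num.Theory.
Local Open Scope ring_scope.

(* The product (z_t1 - z'_t1)...(z_tk - z'_tk) det M_IJ det M'_KL is, up to
   reordering, itself a single 2k x 2k minor of the generator matrix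
   [M_D] = [[M, 0], [M', (z_t - z'_t) M']] of M_D: take the rows I of the upper
   block and K of the lower block, the columns J among the generators (g_j)_D
   and, for the m-th index of L, the column (0, (z_tm - z'_tm) g'_(L m)).  That
   minor is block lower triangular with diagonal blocks M_IJ and
   M'_KL * diag(z_tm - z'_tm), whence the formula. *)

Lemma injective_kindex_perm {m q : nat} (g : 'I_m -> 'I_q) : injective g ->
  exists (g' : {ffun 'I_m -> 'I_q}) (s : 'S_m),
    kindex g' /\ forall i, g i = g' (s i).
Proof.
move=> g_inj.
pose le := fun a b : 'I_q => (a <= b)%N.
pose s0 := [tuple g i | i < m].
have size_sorted : size (sort le s0) == m by rewrite size_sort size_tuple.
pose ts : m.-tuple 'I_q := Tuple size_sorted.
have perm_s0_ts : perm_eq s0 ts by rewrite perm_sym perm_sort.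
have [s def_s0] := tuple_permP perm_s0_ts.
exists [ffun i => tnth ts i], s; split; last first.
  move=> i; rewrite ffunE.
  have := congr1 (fun u : seq _ => nth (g i) u i) def_s0.
  by rewrite -!tnth_nth !tnth_map !tnth_ord_tuple.
have ts_uniq : uniq ts by rewrite sort_uniq map_inj_uniq ?enum_uniq.
have ts_sorted : sorted le ts by apply: sort_sorted => a b; apply: leq_total.
have le_trans : transitive le by move=> b a c; apply: leq_trans.
apply/forallP=> i; apply/forallP=> j; apply/implyP=> lt_ij; rewrite !ffunE.
have x0 := tnth ts i.
have le_ij : (tnth ts i <= tnth ts j)%N.
  rewrite !(tnth_nth x0); apply: (sorted_ltn_nth le_trans x0 ts_sorted) => //;
    by rewrite inE size_tuple.
have ne_ij : tnth ts i != tnth ts j.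
  rewrite !(tnth_nth x0) nth_uniq ?size_tuple //.
  by apply: contraTneq lt_ij => /val_inj ->; rewrite ltnn.
by rewrite ltn_neqAle le_ij andbT; apply: contra ne_ij => /eqP/val_inj ->.
Qed.

Section MinorIdeal.

Variable S : comNzRingType.

Lemma det_mxsub_row_noninj {P Q m : nat} (A : 'M[S]_(P, Q))
    (f : 'I_m -> 'I_P) (g : 'I_m -> 'I_Q) :
  ~~ injectiveb f -> \det (mxsub f g A) = 0.
Proof.
case/injectivePn=> i1 [i2 ne_i12 eq_f].
by apply: (determinant_alternate ne_i12) => j; rewrite !mxE eq_f.
Qed.

Lemma det_mxsub_col_noninj {P Q m : nat} (A : 'M[S]_(P, Q))
    (f : 'I_m -> 'I_P) (g : 'I_m -> 'I_Q) :
  ~~ injectiveb g -> \det (mxsub f g A) = 0.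
Proof. by move=> g_noninj; rewrite -det_tr trmx_mxsub det_mxsub_row_noninj. Qed.

Lemma minor_ideal0 {P Q m : nat} (A : 'M[S]_(P, Q)) : minor_ideal m A 0.
Proof. by exists [ffun=> 0]; rewrite big1 // => fg _; rewrite ffunE mul0r. Qed.

Lemma minor_ideal_kminor {P Q m : nat} (A : 'M[S]_(P, Q))
    (f : {ffun 'I_m -> 'I_P}) (g : {ffun 'I_m -> 'I_Q}) (c : S) :
  kindex f -> kindex g -> minor_ideal m A (c * \det (mxsub f g A)).
Proof.
move=> kf kg; exists [ffun fg => if fg == (f, g) then c else 0].
rewrite (bigD1 (f, g)) /= ?kf ?kg // big1 ?addr0 => [|fg /andP[_ /negbTE ne]].
  by rewrite ffunE eqxx.
by rewrite ffunE ne mul0r.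
Qed.

Lemma minor_ideal_minor {P Q m : nat} (A : 'M[S]_(P, Q))
    (f : 'I_m -> 'I_P) (g : 'I_m -> 'I_Q) :
  minor_ideal m A (\det (mxsub f g A)).
Proof.
have [f_inj | f_noninj] := boolP (injectiveb f); last first.
  by rewrite det_mxsub_row_noninj //; apply: minor_ideal0.
have [g_inj | g_noninj] := boolP (injectiveb g); last first.
  by rewrite det_mxsub_col_noninj //; apply: minor_ideal0.
have /injectiveP/injective_kindex_perm[f' [s1 [kf' def_f]]] := f_inj.
have /injectiveP/injective_kindex_perm[g' [s2 [kg' def_g]]] := g_inj.
have -> : mxsub f g A = row_perm s1 (col_perm s2 (mxsub f' g' A)).
  by apply/matrixP=> i j; rewrite !mxE def_f def_g.
rewrite row_permE col_permE !det_mulmx !det_perm mulrA mulrAC.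
exact: minor_ideal_kminor.
Qed.

End MinorIdeal.

Section DoubledMinor.

Variables (R S : comNzRingType) (phi1 phi2 : {rmorphism R -> S}).
Variables (n p r : nat) (z : 'I_n -> R) (G : 'M[R]_(p, r)).
Variables (k : nat) (t : 'I_k -> 'I_n) (I K : 'I_k -> 'I_p) (J L : 'I_k -> 'I_r).

Definition MD_rows (i : 'I_(k + k)) : 'I_(p + p) :=
  match split i with inl a => lshift p (I a) | inr b => rshift p (K b) end.

Definition MD_cols (j : 'I_(k + k)) : 'I_(r + n * r) :=
  match split j with
  | inl a => lshift (n * r) (J a)
  | inr b => rshift r (mxvec_index (t b) (L b))
  end.

Definition coord_diff : 'rV[S]_k := \row_m (phi1 (z (t m)) - phi2 (z (t m))).

Lemma MD_minor_block :
  mxsub MD_rows MD_cols (MD_mx phi1 phi2 z G) =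
  block_mx (map_mx phi1 (mxsub I J G)) 0
           (mxsub K J (map_mx phi2 G))
           (mxsub K L (map_mx phi2 G) *m diag_mx coord_diff).
Proof.
apply/matrixP=> i j; rewrite -[i]splitK -[j]splitK.
case: (split i) => a; case: (split j) => b;
  rewrite mxE /MD_rows /MD_cols !unsplitK /MD_mx.
- by rewrite block_mxEul row_mxEl col_mxEu !mxE.
- by rewrite block_mxEur row_mxEr col_mxEu !mxE.
- by rewrite block_mxEdl row_mxEl col_mxEd !mxE.
- by rewrite block_mxEdr row_mxEr col_mxEd mul_mx_diag !mxE mxvecE !mxE mulrC.
Qed.

Lemma det_MD_minor :
  \det (mxsub MD_rows MD_cols (MD_mx phi1 phi2 z G)) =
  (\prod_(m < k) (phi1 (z (t m)) - phi2 (z (t m))))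
    * phi1 (\det (mxsub I J G)) * \det (mxsub K L (map_mx phi2 G)).
Proof.
rewrite MD_minor_block det_lblock det_mulmx det_diag det_map_mx.
under [\prod_i _]eq_bigr do rewrite mxE.
by rewrite mulrA mulrC mulrA.
Qed.

End DoubledMinor.

(* Theorem 10: the product is the minor of [M_D] computed above (the statement
   holds even without the hypothesis that I, J, K, L are k-indexes). *)
Theorem mainTheorem10 (R S : comNzRingType) (phi1 phi2 : {rmorphism R -> S})
  (n p r : nat) (z : 'I_n -> R) (G : 'M[R]_(p, r)) (k : nat)
  (t : 'I_k -> 'I_n)
  (I K : {ffun 'I_k -> 'I_p}) (J L : {ffun 'I_k -> 'I_r}) :
  kindex I -> kindex J -> kindex K -> kindex L ->
  minor_ideal (2 * k) (MD_mx phi1 phi2 z G)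
    ((\prod_(m < k) (phi1 (z (t m)) - phi2 (z (t m))))
       * phi1 (\det (mxsub I J G)) * \det (mxsub K L (map_mx phi2 G))).
Proof.
move=> _ _ _ _; rewrite mul2n -addnn -det_MD_minor.
exact: minor_ideal_minor.
Qed.
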